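(* Let $q\ge 2$ and let $D$ be a directed graph on $n$ vertices which has an induced acyclic subgraph on at least $n/2$ vertices. If $D$ is $q$-solvable, then $n\ge 2\alpha(q-1)$, where $\alpha\approx 0.567$ is the unique real number satisfying $\alpha+\ln\alpha=0$.
   Context: A directed graph $D=(V,E)$ has arcs $E \subseteq \{(u,v)\in V^2 : u \neq v\}$ (bidirectional pairs allowed). An induced subgraph is acyclic if it contains no directed cycle. $N^-(v)=\{u:(u,v)\in E\}$. For $q\ge2$ let $[q]=\{0,\dots,q-1\}$. A $D$-function over $[q]$ is a map $f=(f_v)_{v\in V}:[q]^V\to[q]^V$ with each $f_v(x)$ depending only on $(x_u)_{u\in N^-(v)}$. $D$ is $q$-solvable if some $D$-function $f$ over $[q]$ has the property that for every $x\in[q]^V$ there is $v$ with $f_v(x)=x_v$. *)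

From mathcomp Require Import all_boot.
From Stdlib Require Import Reals.
Set Implicit Arguments. Unset Strict Implicit. Unset Printing Implicit Defensive.

(* A digraph on vertex set 'I_n is an irreflexive boolean arc relation E;
   E u v means the arc (u,v). *)
Definition loopless (n : nat) (E : rel 'I_n) : Prop := forall v, ~~ E v v.

Definition induced_acyclic (n : nat) (E : rel 'I_n) (S : {set 'I_n}) : Prop :=
  forall s : seq 'I_n, s != [::] -> all (fun v => v \in S) s -> ~~ cycle E s.

Definition is_D_function (n q : nat) (E : rel 'I_n)
    (f : ('I_n -> 'I_q) -> 'I_n -> 'I_q) : Prop :=
  forall (v : 'I_n) (x y : 'I_n -> 'I_q),
    (forall u, E u v -> x u = y u) -> f x v = f y v.

Definition q_solvable (n q : nat) (E : rel 'I_n) : Prop :=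
  exists f : ('I_n -> 'I_q) -> 'I_n -> 'I_q,
    is_D_function E f /\ forall x : 'I_n -> 'I_q, exists v, f x v = x v.

(* Fix a solving D-function f and an acyclic induced vertex set A.  Call a
   configuration x in [q]^V "unfixed on A" when f x v <> x v for all v in A.
   1. Acyclicity gives a vertex of A with no arc into A (a sink of A).  As f is
      a D-function and D is loopless, the value of x at such a sink v affects
      neither f x v nor f x u for u in A \ v; peeling sinks off one by one
      shows that exactly (q-1)^|A| q^(n-|A|) configurations are unfixed on A.
   2. Every configuration has a fixed vertex, so an unfixed one has it outside
      A; since f x u does not depend on x u, each vertex u is fixed by exactly
      q^(n-1) configurations.  The union bound yields
      (q-1)^|A| q <= (n - |A|) q^|A|.
   3. Taking |A| = m + 1 = ceil(n/2), t = n - m - 1 and Q = q - 1 this reads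
      Q^(m+1) <= t (Q+1)^m with m <= t; the estimate (1 + 1/Q)^m <= e^(m/Q)
      and alpha e^alpha = 1 then force alpha Q <= t, whence n >= 2t >= 2 alpha Q. *)
From mathcomp Require Import all_boot zify perm.
From Stdlib Require Import Reals Lra.
(* Stdlib rebinds "_ ^ _" in nat_scope to Nat.pow; restore ssrnat's expn. *)
Import ssrnat.
Set Implicit Arguments. Unset Strict Implicit. Unset Printing Implicit Defensive.

Section Configurations.
Variables n q : nat.
Local Notation config := {ffun 'I_n -> 'I_q}.

Definition upd (x : config) (v : 'I_n) (c : 'I_q) : config :=
  [ffun w => if w == v then c else x w].

Lemma sum1_config : \sum_(x : config) 1 = q ^ n.
Proof. by rewrite sum1_card card_ffun !card_ord. Qed.

Lemma updE (x : config) v c w : upd x v c w = if w == v then c else x w.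
Proof. by rewrite ffunE. Qed.

(* Exchanging the colours c0 and c at v; an involution mapping the fibre
   {x v = c0} onto the fibre {x v = c}. *)
Definition swap_at (v : 'I_n) (c0 c : 'I_q) (x : config) : config :=
  upd x v (tperm c0 c (x v)).

Lemma swap_atK v c0 c : involutive (swap_at v c0 c).
Proof.
move=> x; apply/ffunP => w; rewrite !updE eqxx.
by case: eqP => [->|//]; rewrite tpermK.
Qed.

Lemma sum_by_fibre (v : 'I_n) (c0 : 'I_q) (F : config -> nat) :
  \sum_(x : config) F x = \sum_(x : config | x v == c0) \sum_(c : 'I_q) F (upd x v c).
Proof.
rewrite exchange_big (partition_big (fun x : config => x v) xpredT) //=.
apply: eq_bigr => c _; rewrite (reindex_inj (can_inj (swap_atK v c0 c))) /=.
apply: eq_big => x; rewrite /swap_at updE eqxx (canF_eq (tpermK c0 c)) tpermR //.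
by move=> /eqP ->; rewrite tpermL.
Qed.

End Configurations.

Lemma sum_eq_indicator (T : finType) (a : T) : \sum_(x : T) (a == x : nat) = 1.
Proof. by rewrite (bigD1 a) //= eqxx big1 // => x; rewrite eq_sym => /negPf ->. Qed.

Lemma sum_neq_indicator (T : finType) (a : T) :
  \sum_(x : T) (a != x : nat) = #|T|.-1.
Proof.
rewrite (bigD1 a) //= eqxx add0n -(cardC1 a) -sum1_card.
by apply: eq_bigr => x; rewrite eq_sym => ->.
Qed.

Section AcyclicSets.
Variables (n : nat) (E : rel 'I_n).

Lemma induced_acyclic_sub (A B : {set 'I_n}) :
  B \subset A -> induced_acyclic E A -> induced_acyclic E B.
Proof.
move=> sBA acyc s s_nil sB; apply: acyc s_nil _.
by apply/allP => z /(allP sB) /(subsetP sBA).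
Qed.

(* Otherwise take v in A with the fewest
   vertices reachable inside A and a successor w of v in A: w reaches no
   fewer vertices than v, hence w reaches v, closing a cycle through v. *)
Lemma acyclic_sink (A : {set 'I_n}) (v0 : 'I_n) :
  v0 \in A -> induced_acyclic E A ->
  exists2 v, v \in A & forall u, u \in A -> ~~ E v u.
Proof.
move=> Av0 acyc.
suff /exists_inP[v Av /forall_inP v_sink] :
    [exists v in A, [forall u in A, ~~ E v u]] by exists v.
apply: contraT => /exists_inPn no_sink.
pose e : rel 'I_n := fun a b => [&& a \in A, b \in A & E a b].
pose reach a := [set b | connect e a b].
case: (arg_minnP (fun a => #|reach a|) Av0) => v Av v_min.
have [w Aw Evw] : exists2 w, w \in A & E v w.
  by have /forall_inPn[w Aw] := no_sink v Av; rewrite negbK; exists w.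
have evw : e v w by apply/and3P.
have reach_wv : reach w \subset reach v.
  by apply/subsetP => b; rewrite !inE; apply: connect_trans (connect1 evw).
have /subset_cardP/(_ reach_wv) same_reach : #|reach w| = #|reach v|.
  by apply/eqP; rewrite eqn_leq subset_leq_card // v_min.
have /connectP[p pw lastp] : connect e w v.
  by have := same_reach v; rewrite !inE connect0.
have cyc : cycle e (w :: p) by rewrite /= rcons_path pw -lastp.
have cycE : cycle E (w :: p) by apply: sub_cycle cyc => a b /and3P[].
have inA : all (fun u => u \in A) (w :: p).
  by apply/allP => u /(next_cycle cyc) /and3P[].
by have := acyc (w :: p) isT inA; rewrite cycE.
Qed.

End AcyclicSets.

Section SolvingFunctions.
Variables (n q : nat) (E : rel 'I_n) (f : ('I_n -> 'I_q) -> 'I_n -> 'I_q).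
Hypotheses (f_local : is_D_function E f) (E_loopless : loopless E) (q_gt0 : 0 < q).
Local Notation config := {ffun 'I_n -> 'I_q}.

Lemma f_upd (x : config) v c u : ~~ E v u -> f (upd x v c) u = f x u.
Proof.
move=> nEvu; apply: f_local => w Ewu; rewrite updE.
by case: eqP => // wv; move: nEvu; rewrite -wv Ewu.
Qed.

(* Since f x u does not depend on x u, exactly one colour at u is fixed in
   every fibre: u is fixed by q^(n-1) configurations. *)
Lemma count_fixed_at (u : 'I_n) :
  (\sum_(x : config) (f x u == x u : nat)) * q = q ^ n.
Proof.
pose c0 : 'I_q := Ordinal q_gt0.
rewrite -sum1_config (sum_by_fibre u c0) (sum_by_fibre u c0 (fun _ => 1)).
rewrite big_distrl; apply: eq_bigr => x _ /=.
rewrite sum1_card card_ord -[RHS]mul1n -(sum_eq_indicator (f x u)).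
by congr (_ * _); apply: eq_bigr => c _; rewrite f_upd ?E_loopless // updE eqxx.
Qed.

Definition unfixed_on (A : {set 'I_n}) (x : config) : bool :=
  [forall v in A, f x v != x v].

Lemma unfixed_onD1 (A : {set 'I_n}) v (x : config) : v \in A ->
  unfixed_on A x = unfixed_on (A :\ v) x && (f x v != x v).
Proof.
move=> Av; apply/forall_inP/andP => [unfixA | [/forall_inP unfixB fv] w Aw].
  by split; [apply/forall_inP => w /setD1P[_ /unfixA] | exact: unfixA].
by case: (eqVneq w v) => [-> // | wv]; apply: unfixB; rewrite in_setD1 wv.
Qed.

Lemma unfixed_on_upd (B : {set 'I_n}) v (x : config) c :
  v \notin B -> (forall u, u \in B -> ~~ E v u) ->
  unfixed_on B (upd x v c) = unfixed_on B x.
Proof.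
move=> vB v_sink; apply: eq_forallb_in => u Bu.
have /negPf uv : u != v by apply: contraNneq vB => <-.
by rewrite f_upd ?v_sink // updE uv.
Qed.

(* Exactly (q-1)^|A| q^(n-|A|) configurations are unfixed on an acyclic A:
   removing a sink v of A multiplies the count by (q-1)/q, since x v must
   avoid the single value f x v, which does not depend on x v. *)
Lemma count_unfixed_on_acyclic (A : {set 'I_n}) : induced_acyclic E A ->
  (\sum_(x : config) (unfixed_on A x : nat)) * q ^ #|A| = (q - 1) ^ #|A| * q ^ n.
Proof.
move eq_k: #|A| => k; elim: k A eq_k => [|k IH] A cardA acyc.
  rewrite (cards0_eq cardA) muln1 mul1n -sum1_config.
  apply: eq_bigr => x _.
  by have -> : unfixed_on set0 x by apply/forall_inP => v; rewrite inE.
have [v0 Av0] : exists v0, v0 \in A by apply/card_gt0P; rewrite cardA.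
have [v Av v_sink] := acyclic_sink Av0 acyc.
set B := A :\ v.
have cardB : #|B| = k by move: cardA; rewrite (cardsD1 v) Av add1n => -[].
have acycB : induced_acyclic E B by apply: induced_acyclic_sub acyc; apply: subD1set.
have vB : v \notin B by rewrite setD11.
have B_sink u : u \in B -> ~~ E v u by case/setD1P => _; apply: v_sink.
have peel : (\sum_(x : config) (unfixed_on A x : nat)) * q =
            (q - 1) * \sum_(x : config) (unfixed_on B x : nat).
  pose c0 : 'I_q := Ordinal q_gt0.
  rewrite (sum_by_fibre v c0) (sum_by_fibre v c0 (fun x => unfixed_on B x : nat)).
  rewrite big_distrl big_distrr; apply: eq_bigr => x _ /=.
  have unfixA c : unfixed_on A (upd x v c) = unfixed_on B x && (f x v != c).
    by rewrite (unfixed_onD1 _ Av) unfixed_on_upd // f_upd ?E_loopless // updE eqxx.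
  under eq_bigr do rewrite unfixA.
  under [in RHS]eq_bigr do rewrite unfixed_on_upd //.
  case: (unfixed_on B x) => /=; last by rewrite !big1_eq muln0.
  by rewrite (sum_neq_indicator (f x v)) sum1_card !card_ord subn1 mulnC.
by rewrite expnSr mulnA mulnAC peel -mulnA (IH B cardB acycB) mulnA -expnS.
Qed.

Hypothesis f_solves : forall x : 'I_n -> 'I_q, exists v, f x v = x v.

(* An unfixed configuration on A is fixed at some vertex outside A. *)
Lemma count_unfixed_on_le (A : {set 'I_n}) :
  (\sum_(x : config) (unfixed_on A x : nat)) * q <= #|~: A| * q ^ n.
Proof.
have cover : \sum_(x : config) (unfixed_on A x : nat) <=
             \sum_(x : config) \sum_(u in ~: A) (f x u == x u : nat).
  apply: leq_sum => x _; case unfixA: (unfixed_on A x) => //.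
  have [v fv] := f_solves x.
  have vA : v \in ~: A.
    by rewrite inE; apply: contraTN unfixA => Av; rewrite (unfixed_onD1 _ Av) fv eqxx andbF.
  by rewrite (bigD1 v) //= fv eqxx.
apply: leq_trans (leq_mul cover (leqnn q)) _.
rewrite exchange_big big_distrl -sum_nat_const; apply/eq_leq/eq_bigr => u _.
exact: count_fixed_at.
Qed.

(* Comparing the exact count with the union bound. *)
Lemma acyclic_solving_bound (A : {set 'I_n}) : induced_acyclic E A ->
  (q - 1) ^ #|A| * q <= #|~: A| * q ^ #|A|.
Proof.
move=> acyc; have qn_gt0 : 0 < q ^ n by rewrite expn_gt0 q_gt0.
rewrite -(leq_pmul2r qn_gt0) mulnAC -(count_unfixed_on_acyclic acyc) mulnAC.
rewrite -[X in _ <= X]mulnA [q ^ #|A| * _]mulnC mulnA.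
by rewrite leq_pmul2r ?expn_gt0 ?q_gt0 ?count_unfixed_on_le.
Qed.

End SolvingFunctions.

Lemma subset_of_card (T : finType) (S : {set T}) (k : nat) :
  k <= #|S| -> exists2 A : {set T}, A \subset S & #|A| = k.
Proof.
move=> k_le; exists [set x in take k (enum S)].
  by apply/subsetP => x; rewrite inE => /mem_take; rewrite mem_enum.
rewrite cardsE (card_uniqP _) ?take_uniq ?enum_uniq //.
by rewrite size_takel // -cardE.
Qed.

Lemma INR_expn (a k : nat) : INR (a ^ k) = (INR a ^ k)%R.
Proof. by elim: k => // k IH; rewrite expnS mult_INR IH. Qed.

Section LambertBound.
Local Open Scope R_scope.
Variable alpha : R.
Hypotheses (alpha_gt0 : 0 < alpha) (alpha_eq : alpha + ln alpha = 0).

Lemma alpha_exp : alpha * exp alpha = 1.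
Proof.
have e_alpha : exp (- alpha) = alpha by rewrite (_ : - alpha = ln alpha) ?exp_ln //; lra.
by rewrite -{1}e_alpha -exp_plus Rplus_opp_l exp_0.
Qed.

Lemma pow_le_exp (y : R) (m : nat) : 0 <= y -> (1 + y) ^ m <= exp (INR m * y).
Proof.
move=> y_ge0; elim: m => [|m IH]; first by rewrite /= Rmult_0_l exp_0; lra.
rewrite S_INR Rmult_plus_distr_r Rmult_1_l exp_plus -tech_pow_Rmult Rmult_comm.
by apply: Rmult_le_compat => //; [apply: pow_le | | apply: exp_ineq1_le]; lra.
Qed.

(* Were t < alpha Q, then m/Q < alpha and (Q+1)^m <= Q^m e^alpha,
   so Q <= t e^alpha, i.e. alpha Q <= t after all. *)
Lemma alpha_bound (Q t : R) (m : nat) :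
  1 <= Q -> INR m <= t -> Q ^ m.+1 <= t * (Q + 1) ^ m -> alpha * Q <= t.
Proof.
move=> Q_ge1 m_le_t hQ; case: (Rle_or_lt (alpha * Q) t) => [// | t_lt].
have invQ_ge0 : 0 <= / Q by apply/Rlt_le/Rinv_0_lt_compat; lra.
have m_lt : INR m * / Q < alpha.
  apply: (Rmult_lt_reg_r Q); first lra.
  by rewrite Rmult_assoc Rinv_l; lra.
have growth : (Q + 1) ^ m <= Q ^ m * exp alpha.
  have -> : Q + 1 = Q * (1 + / Q) by field; lra.
  rewrite Rpow_mult_distr; apply: Rmult_le_compat_l; first by apply: pow_le; lra.
  by apply: Rle_trans (pow_le_exp m invQ_ge0) _; apply/Rlt_le/exp_increasing.
have Qm_gt0 : 0 < Q ^ m by apply: pow_lt; lra.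
have t_ge0 : 0 <= t by have := pos_INR m; lra.
have Q_le : Q <= t * exp alpha.
  apply: (Rmult_le_reg_r (Q ^ m)) => //.
  have := Rmult_le_compat_l t _ _ t_ge0 growth; rewrite -tech_pow_Rmult in hQ; lra.
have := Rmult_le_compat_l alpha _ _ (Rlt_le _ _ alpha_gt0) Q_le.
by rewrite -Rmult_assoc (Rmult_comm alpha t) Rmult_assoc alpha_exp; lra.
Qed.

End LambertBound.

Theorem corollary15 (q n : nat) (E : rel 'I_n) (alpha : R) :
  (2 <= q)%N ->
  loopless E ->
  (exists S : {set 'I_n}, (n <= 2 * #|S|)%N /\ induced_acyclic E S) ->
  q_solvable q E ->
  (0 < alpha)%R -> (alpha + ln alpha = 0)%R ->
  (INR n >= 2 * alpha * INR (q - 1))%R.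
Proof.
move=> q_ge2 E_loopless [S [S_large S_acyc]] [f [f_local f_solves]] alpha_gt0 alpha_eq.
have q_gt0 : 0 < q by apply: leq_trans q_ge2.
have n_gt0 : 0 < n.
  by have [v _] := f_solves (fun _ => Ordinal q_gt0); exact: leq_ltn_trans (leq0n v) (ltn_ord v).
(* Work with an acyclic set A of size m + 1 = ceil(n/2) and t = n - m - 1. *)
have [m [m_S m_t t_n]] : exists m, [/\ m.+1 <= #|S|, m <= n - m.+1 & (n - m.+1) * 2 <= n].
  by exists (n.-1 %/ 2); split; lia.
have [A A_S cardA] := subset_of_card m_S.
have cardCA : #|~: A| = n - m.+1.
  by apply/eqP; rewrite -(eqn_add2l #|A|) cardsC cardA card_ord; apply/eqP; lia.
have := acyclic_solving_bound f_local E_loopless q_gt0 f_solves (induced_acyclic_sub A_S S_acyc).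
rewrite cardCA cardA [q ^ _]expnSr mulnA leq_pmul2r // => /leP /le_INR.
rewrite mult_INR !INR_expn => bound.
have q_succ : INR q = (INR (q - 1) + 1)%R by rewrite -S_INR subn1 prednK.
rewrite q_succ in bound.
have Q_ge1 : (1 <= INR (q - 1))%R by apply: (le_INR 1); apply/leP; lia.
have t_ge_m : (INR m <= INR (n - m.+1))%R by apply/le_INR/leP.
have := alpha_bound alpha_gt0 alpha_eq Q_ge1 t_ge_m bound.
have /leP /le_INR := t_n; rewrite mult_INR /=; lra.
Qed.
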